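(* For every preference profile $p\in\mathcal P$, $M(p)=D_{\mu(p)}(p)$.
   Context: Let $n,h\ge2$, $N=\{1,\dots,n\}$ the alternatives, $H=\{1,\dots,h\}$ the individuals. A preference profile is an $h$-tuple $p=(p_1,\dots,p_h)$ of linear orders on $N$; $\mathcal P$ is the set of profiles; $x>_{p_i}y$ means $x\ne y$ and $x$ is ranked above $y$ by $p_i$. The Minimax SCC is $M(p)=\mathrm{argmin}_{x\in N}\max_{y\in N\setminus\{x\}}|\{i\in H: y>_{p_i}x\}|$. A majority threshold is an integer $\mu$ with $h/2<\mu\le h$. For such $\mu$, $D_\mu(p)=\{x\in N:\ \forall y\in N,\ |\{i\in H: y>_{p_i}x\}|<\mu\}$. Define $\mu(p)=\min\{\mu\in\mathbb N\cap(h/2,h]: D_\mu(p)\neq\varnothing\}$ (this set of thresholds is nonempty). *)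

From mathcomp Require Import all_boot all_order all_fingroup.
Set Implicit Arguments. Unset Strict Implicit. Unset Printing Implicit Defensive.

(* Alternatives N = 'I_n (0-based), individuals H = 'I_h.
   A linear order on 'I_n is represented by a permutation r : {perm 'I_n}
   giving the rank (position) of each alternative: x is ranked above y
   iff r x < r y. This is a bijection between permutations and linear orders. *)
Definition linord (n : nat) := {perm 'I_n}.
Definition profile (n h : nat) := {ffun 'I_h -> linord n}.

Definition above n (o : linord n) (x y : 'I_n) : bool := (o x < o y)%N.

Definition nbeat n h (p : profile n h) (y x : 'I_n) : nat :=
  #|[set i : 'I_h | above (p i) y x]|.

Definition maxdef n h (p : profile n h) (x : 'I_n) : nat :=
  \max_(y | y != x) nbeat p y x.

Definition minimax n h (p : profile n h) : {set 'I_n} :=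
  [set x | [forall z, maxdef p x <= maxdef p z]].

Definition is_threshold (h mu : nat) : bool := (h < 2 * mu)%N && (mu <= h)%N.

Definition Dmu n h (mu : nat) (p : profile n h) : {set 'I_n} :=
  [set x | [forall y, nbeat p y x < mu]].

(* mu(p): least threshold with D_mu(p) nonempty (default h.+1 if none;
   the set of such thresholds is nonempty, so the default is never used). *)
Definition mu_p n h (p : profile n h) : nat :=
  \big[minn/h.+1]_(m < h.+1 | is_threshold h m && (Dmu m p != set0)) (m : nat).

From mathcomp Require Import all_boot all_order all_fingroup.
From mathcomp Require Import zify.

Set Implicit Arguments.
Unset Strict Implicit.
Unset Printing Implicit Defensive.

(* [D_mu(p)] consists of the alternatives whose worst defeat [maxdef] is below
   [mu], so it contains every minimax winner as soon as it is nonempty.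
   Conversely, let [x] be in [D_mu(p)].  If [x] suffers a majority defeat,
   then [maxdef p x] is itself a majority threshold, and minimality of [mu(p)]
   rules out any [w] with [maxdef p w < maxdef p x].  Otherwise [x] is a
   minimax winner because [maxdef p x + maxdef p w >= h] for all [w != x]: the
   defeats of [x] by [w] and of [w] by [x] add up to [h]. *)

Lemma bigmin_leq (I : eqType) (r : seq I) (P : pred I) (F : I -> nat) idx i :
  i \in r -> P i -> (\big[minn/idx]_(j <- r | P j) F j <= F i)%N.
Proof.
elim: r => // a r IHr; rewrite inE big_cons => /orP[/eqP <- -> | ri Pi].
  exact: geq_minl.
case: (P a); last exact: IHr.
exact: leq_trans (geq_minr _ _) (IHr ri Pi).
Qed.

Lemma bigmin_attained (I : Type) (r : seq I) (P : pred I) (F : I -> nat) idx :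
  \big[minn/idx]_(j <- r | P j) F j = idx \/
  exists2 i, P i & \big[minn/idx]_(j <- r | P j) F j = F i.
Proof.
apply: (big_ind (fun m => m = idx \/ exists2 i, P i & m = F i)); [by left | | by right; exists i].
by move=> a b Ha Hb; rewrite /minn; case: ltnP.
Qed.

Section Minimax.
Variables (n h : nat) (p : profile n h).

Lemma nbeat_id x : nbeat p x x = 0.
Proof. by apply/eqP; rewrite cards_eq0; apply/eqP/setP => i; rewrite !inE /above ltnn. Qed.

Lemma nbeatC x w : x != w -> nbeat p x w + nbeat p w x = h.
Proof.
move=> xw; rewrite /nbeat -[RHS](card_ord h) -(cardsC [set i | above (p i) x w]).
congr (_ + _); apply: eq_card => i; rewrite !inE /above -leqNgt ltn_neqAle.
suff -> : (p i w : nat) != p i x by [].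
by apply: contra xw => /eqP/val_inj/perm_inj ->.
Qed.

Lemma leq_nbeat_maxdef y x : y != x -> (nbeat p y x <= maxdef p x)%N.
Proof. by move=> yx; apply: (leq_bigmax_cond (P := fun y => y != x)). Qed.

Lemma maxdef_leq x : (maxdef p x <= h)%N.
Proof.
apply/bigmax_leqP => y _.
by apply: leq_trans (max_card _) _; rewrite card_ord.
Qed.

Lemma maxdef_top (i : 'I_h) x : p i x = 0 :> nat -> (maxdef p x < h)%N.
Proof.
move=> top_x; apply: (@leq_trans #|[set~ i]|.+1); last first.
  by rewrite cardsC1 card_ord prednK // (leq_ltn_trans _ (ltn_ord i)).
rewrite ltnS; apply/bigmax_leqP => y _; apply: subset_leq_card; apply/subsetP => j.
by rewrite !inE /above; apply: contraTneq => ->; rewrite top_x.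
Qed.

Lemma exists_maxdef_lt : (0 < n)%N -> (0 < h)%N -> exists x, (maxdef p x < h)%N.
Proof.
move=> n_gt0 h_gt0; pose i := Ordinal h_gt0.
by exists ((p i)^-1 (Ordinal n_gt0))%g; apply: (maxdef_top (i := i)); rewrite permKV.
Qed.

Lemma maxdef_pair x w : x != w -> (h <= maxdef p x + maxdef p w)%N.
Proof.
move=> xw; rewrite -[X in (X <= _)%N](nbeatC xw) addnC.
by apply: leq_add; apply: leq_nbeat_maxdef; rewrite // eq_sym.
Qed.

Lemma minimax_no_majority_defeat x : (2 * maxdef p x <= h)%N -> x \in minimax p.
Proof.
move=> no_major; rewrite inE; apply/forallP => w.
have [<-|xw] := eqVneq x w; first by [].
by have := maxdef_pair xw; lia.
Qed.

Lemma in_Dmu m x : (0 < m)%N -> (x \in Dmu m p) = (maxdef p x < m)%N.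
Proof.
move=> m_gt0; rewrite inE -(prednK m_gt0) ltnS; apply/forallP/bigmax_leqP.
  by move=> lt_m y _; rewrite -ltnS.
move=> le_m y; have [->|yx] := eqVneq y x; first by rewrite nbeat_id.
by rewrite ltnS le_m.
Qed.

Lemma mu_p_min m : is_threshold h m -> Dmu m p != set0 -> (mu_p p <= m)%N.
Proof.
move=> thr_m D_m; have m_lt : (m < h.+1)%N by case/andP: thr_m.
by apply: (bigmin_leq _ _ (mem_index_enum (Ordinal m_lt))); rewrite /= thr_m D_m.
Qed.

Lemma mu_pP m : is_threshold h m -> Dmu m p != set0 ->
  is_threshold h (mu_p p) && (Dmu (mu_p p) p != set0).
Proof.
move=> thr_m D_m; have := mu_p_min thr_m D_m; rewrite /mu_p.
have [->|[i good_i ->] //] := bigmin_attained (index_enum 'I_h.+1)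
  (fun m => is_threshold h m && (Dmu m p != set0)) (@nat_of_ord _) h.+1.
by move: thr_m; rewrite /is_threshold; lia.
Qed.

Lemma mu_p_threshold : (0 < n)%N -> (0 < h)%N ->
  is_threshold h (mu_p p) && (Dmu (mu_p p) p != set0).
Proof.
move=> n_gt0 h_gt0; have [x x_lt] := exists_maxdef_lt n_gt0 h_gt0.
apply: (@mu_pP h); first by rewrite /is_threshold; lia.
by apply/set0Pn; exists x; rewrite in_Dmu.
Qed.

End Minimax.

Theorem proposition1 (n h : nat) (hn : (2 <= n)%N) (hh : (2 <= h)%N)
  (p : profile n h) :
  minimax p = Dmu (mu_p p) p.
Proof.
have /andP[thr_mu /set0Pn[z]] := mu_p_threshold p (ltnW hn) (ltnW hh).
have mu_gt0 : (0 < mu_p p)%N by move: thr_mu; rewrite /is_threshold; lia.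
rewrite in_Dmu // => z_lt.
apply/setP => x; rewrite in_Dmu // inE; apply/forallP/idP.
  by move=> min_x; apply: leq_ltn_trans (min_x z) z_lt.
move=> x_lt; have [majority|] := ltnP h (2 * maxdef p x); last first.
  by move/minimax_no_majority_defeat; rewrite inE => /forallP.
move=> w; rewrite leqNgt; apply/negP => w_lt.
have thr_x : is_threshold h (maxdef p x) by rewrite /is_threshold majority maxdef_leq.
have D_x : Dmu (maxdef p x) p != set0.
  by apply/set0Pn; exists w; rewrite in_Dmu //; lia.
by have := mu_p_min thr_x D_x; lia.
Qed.
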